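(* Let $A$ be the path algebra over an algebraically closed field $\Bbbk$ of the quiver $1\xrightarrow{\alpha}2\xrightarrow{\beta}3$ modulo $\beta\alpha=0$. Then each of $(\mathrm{F}_{33},\mathrm{F}_{23})$, $(\mathrm{F}_{23},\mathrm{F}_{22})$, $(\mathrm{F}_{22},\mathrm{F}_{12})$, $(\mathrm{F}_{12},\mathrm{F}_{11})$ is a pair of adjoint $1$-morphisms in $\mathcal{C}_A$.
   Context: $e_1,e_2,e_3$ are the primitive idempotents of $A$. $\mathcal{C}$ is a small category equivalent to $A$-mod; the $2$-category $\mathcal{C}_A$ has one object $\mathtt{i}$, $1$-morphisms the endofunctors of $\mathcal{C}$ isomorphic to tensoring with $A$-$A$-bimodules from the additive closure of $A$ and $A\otimes_\Bbbk A$, and $2$-morphisms natural transformations. $\mathrm{F}_0$ is tensoring with $A$ and $\mathrm{F}_{ij}$ is tensoring with $Ae_i\otimes_\Bbbk e_jA$. A pair $(\mathrm{X},\mathrm{Y})$ of $1$-morphisms is a pair of adjoint $1$-morphisms if there exist $2$-morphisms $\alpha:\mathrm{X}\mathrm{Y}\to\mathrm{F}_0$ and $\beta:\mathrm{F}_0\to\mathrm{Y}\mathrm{X}$ with $(\alpha\circ_0\mathrm{id}_{\mathrm{X}})\circ_1(\mathrm{id}_{\mathrm{X}}\circ_0\beta)=\mathrm{id}_{\mathrm{X}}$ and $(\mathrm{id}_{\mathrm{Y}}\circ_0\alpha)\circ_1(\beta\circ_0\mathrm{id}_{\mathrm{Y}})=\mathrm{id}_{\mathrm{Y}}$ ($\circ_0$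 horizontal, $\circ_1$ vertical composition). *)

(* A-mod is modelled (up to equivalence) by the small category of
   finite-dimensional representations of the bound quiver:
   V1 -a-> V2 -b-> V3 with a;b = 0, using the row-vector convention
   (a linear map V -> W is a matrix 'M_(dim V, dim W), v |-> v *m f). *)
From HB Require Import structures.
From mathcomp Require Import all_boot all_order all_algebra.
Set Implicit Arguments. Unset Strict Implicit. Unset Printing Implicit Defensive.
Import GRing.Theory.
Local Open Scope ring_scope.

Section Model.
Variable K : closedFieldType.

Record Rep := MkRep {
  r1 : nat; r2 : nat; r3 : nat;
  ra : 'M[K]_(r1, r2);
  rb : 'M[K]_(r2, r3);
  rrel : ra *m rb = 0 }.

Record Hom (M N : Rep) := MkHom {
  h1 : 'M[K]_(r1 M, r1 N);
  h2 : 'M[K]_(r2 M, r2 N);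
  h3 : 'M[K]_(r3 M, r3 N) }.

Definition is_hom (M N : Rep) (f : Hom M N) : Prop :=
  ra M *m h2 f = h1 f *m ra N /\ rb M *m h3 f = h2 f *m rb N.

(* composition "first f then g" *)
Definition hcompose (M N P : Rep) (f : Hom M N) (g : Hom N P) : Hom M P :=
  MkHom (h1 f *m h1 g) (h2 f *m h2 g) (h3 f *m h3 g).

Definition hid (M : Rep) : Hom M M := MkHom 1%:M 1%:M 1%:M.

Record Fun := MkFun {
  Fo : Rep -> Rep;
  Fm : forall M N : Rep, Hom M N -> Hom (Fo M) (Fo N) }.

Definition FComp (X Y : Fun) : Fun :=
  @MkFun (fun M => Fo X (Fo Y M)) (fun M N f => Fm X (Fm Y f)).

Definition F0 : Fun := @MkFun (fun M => M) (fun M N f => f).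

Inductive vtx := v1 | v2 | v3.

Definition ndim (M : Rep) (j : vtx) : nat :=
  match j with v1 => r1 M | v2 => r2 M | v3 => r3 M end.

Definition hv (M N : Rep) (f : Hom M N) (j : vtx) : 'M[K]_(ndim M j, ndim N j) :=
  match j return 'M[K]_(ndim M j, ndim N j) with
  | v1 => h1 f | v2 => h2 f | v3 => h3 f end.

Lemma P1rel d : (1%:M : 'M[K]_d) *m (0 : 'M[K]_(d, 0)) = 0.
Proof. by rewrite mulmx0. Qed.
Lemma P2rel d : (0 : 'M[K]_(0, d)) *m (1%:M : 'M[K]_d) = 0.
Proof. by rewrite mul0mx. Qed.
Lemma P3rel d : (0 : 'M[K]_(0, 0)) *m (0 : 'M[K]_(0, d)) = 0.
Proof. by rewrite mul0mx. Qed.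

(* Ae_i (x)_k V with dim V = d.  Ae_1 = (k -1-> k -> 0),
   Ae_2 = (0 -> k -1-> k), Ae_3 = (0 -> 0 -> k). *)
Definition Pobj (i : vtx) (d : nat) : Rep :=
  match i with
  | v1 => MkRep (P1rel d)
  | v2 => MkRep (P2rel d)
  | v3 => MkRep (P3rel d)
  end.

Definition Pmap (i : vtx) (d e : nat) (g : 'M[K]_(d, e)) : Hom (Pobj i d) (Pobj i e) :=
  match i return Hom (Pobj i d) (Pobj i e) with
  | v1 => @MkHom (Pobj v1 d) (Pobj v1 e) g g 0
  | v2 => @MkHom (Pobj v2 d) (Pobj v2 e) 0 g g
  | v3 => @MkHom (Pobj v3 d) (Pobj v3 e) 0 0 g
  end.

(* F_ij : M |-> Ae_i (x)_k e_j M  (tensoring with Ae_i (x)_k e_jA). *)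
Definition Fij (i j : vtx) : Fun :=
  @MkFun (fun M => Pobj i (ndim M j)) (fun M N f => Pmap i (hv f j)).

Definition NatT (F G : Fun) := forall M : Rep, Hom (Fo F M) (Fo G M).

Definition is_nat (F G : Fun) (eta : NatT F G) : Prop :=
  (forall M, is_hom (eta M)) /\
  (forall M N (f : Hom M N), is_hom f ->
     hcompose (Fm F f) (eta N) = hcompose (eta M) (Fm G f)).

Definition idN (F : Fun) : NatT F F := fun M => hid (Fo F M).

(* vertical composition sigma o_1 tau  (first tau, then sigma) *)
Definition vcomp (F G H : Fun) (sigma : NatT G H) (tau : NatT F G) : NatT F H :=
  fun M => hcompose (tau M) (sigma M).

Definition hcomp (F F' G G' : Fun) (sigma : NatT F F') (tau : NatT G G')
  : NatT (FComp F G) (FComp F' G') :=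
  fun M => hcompose (Fm F (tau M)) (sigma (Fo G' M)).

Definition adjoint_pair (X Y : Fun) : Prop :=
  exists (al : NatT (FComp X Y) F0) (be : NatT F0 (FComp Y X)),
    is_nat al /\ is_nat be /\
    (forall M, vcomp (F := FComp X F0) (G := FComp (FComp X Y) X) (H := X)
                 (hcomp al (idN X)) (hcomp (idN X) be) M = idN X M) /\
    (forall M, vcomp (F := FComp F0 Y) (G := FComp (FComp Y X) Y) (H := Y)
                 (hcomp (idN Y) al) (hcomp be (idN Y)) M = idN Y M).

End Model.

(* The counits are the evaluation maps [Ae_i (x) e_iM -> M]; the units are
   the maps [M -> Ae_(j-1) (x) e_jM] into the injective envelopes of the
   simple modules at 2 and 3, because [Ae_2 = I_3] and [Ae_1 = I_2].  In each
   pair the composites [F_ij F_kl] collapse to [F_il], since [e_j A e_k] is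
   one-dimensional; this holds by conversion in the model, so the counit and
   unit are just [ev i] and [coev j] below, and the triangle identities reduce
   to matrix identities between identity matrices and matrices with a zero
   dimension. *)
From mathcomp Require Import all_boot all_order all_algebra.
(* Imported after MathComp so that [Hom] is the morphism type of the model,
   not the linear maps of vector.v. *)
Set Implicit Arguments. Unset Strict Implicit. Unset Printing Implicit Defensive.
Import GRing.Theory.
Local Open Scope ring_scope.

Section Adjunctions.
Variable K : closedFieldType.

Lemma Hom_ext (M N : Rep K) (f g : Hom M N) :
  h1 f = h1 g -> h2 f = h2 g -> h3 f = h3 g -> f = g.
Proof. by case: f => ? ? ?; case: g => ? ? ? /= -> -> ->. Qed.

Definition ev (i : vtx) : NatT (Fij K i i) (F0 K) :=
  match i return NatT (Fij K i i) (F0 K) with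
  | v1 => fun M => @MkHom K (Pobj K v1 (r1 M)) M 1%:M (ra M) 0
  | v2 => fun M => @MkHom K (Pobj K v2 (r2 M)) M 0 1%:M (rb M)
  | v3 => fun M => @MkHom K (Pobj K v3 (r3 M)) M 0 0 1%:M
  end.

Definition coev2 : NatT (F0 K) (Fij K v1 v2) :=
  fun M => @MkHom K M (Pobj K v1 (r2 M)) (ra M) 1%:M 0.

Definition coev3 : NatT (F0 K) (Fij K v2 v3) :=
  fun M => @MkHom K M (Pobj K v2 (r3 M)) 0 (rb M) 1%:M.

Ltac mx_simpl :=
  rewrite ?flatmx0 ?thinmx0 ?mul1mx ?mulmx1 ?mul0mx ?mulmx0 ?rrel.

Ltac naturality :=
  split=> [M | M N f [fa fb]]; rewrite /is_hom /=;
  do ?[split]; do ?[apply: Hom_ext => /=]; by mx_simpl.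

Lemma ev_nat i : is_nat (ev i).
Proof. by case: i; naturality. Qed.

Lemma coev2_nat : is_nat coev2.
Proof. by naturality. Qed.

Lemma coev3_nat : is_nat coev3.
Proof. by naturality. Qed.

Ltac triangle_identities :=
  split=> M; apply: Hom_ext; rewrite /= /hcompose /=; by mx_simpl.

Lemma adjoint_F33_F23 : adjoint_pair (Fij K v3 v3) (Fij K v2 v3).
Proof.
exists (ev v3), coev3.
split; [exact: ev_nat | split; [exact: coev3_nat | triangle_identities]].
Qed.

Lemma adjoint_F23_F22 : adjoint_pair (Fij K v2 v3) (Fij K v2 v2).
Proof.
exists (ev v2), coev3.
split; [exact: ev_nat | split; [exact: coev3_nat | triangle_identities]].
Qed.

Lemma adjoint_F22_F12 : adjoint_pair (Fij K v2 v2) (Fij K v1 v2).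
Proof.
exists (ev v2), coev2.
split; [exact: ev_nat | split; [exact: coev2_nat | triangle_identities]].
Qed.

Lemma adjoint_F12_F11 : adjoint_pair (Fij K v1 v2) (Fij K v1 v1).
Proof.
exists (ev v1), coev2.
split; [exact: ev_nat | split; [exact: coev2_nat | triangle_identities]].
Qed.

End Adjunctions.

Theorem mainTheorem14 (K : closedFieldType) :
  adjoint_pair (Fij K v3 v3) (Fij K v2 v3) /\
  adjoint_pair (Fij K v2 v3) (Fij K v2 v2) /\
  adjoint_pair (Fij K v2 v2) (Fij K v1 v2) /\
  adjoint_pair (Fij K v1 v2) (Fij K v1 v1).
Proof.
split; first exact: adjoint_F33_F23.
split; first exact: adjoint_F23_F22.
split; [exact: adjoint_F22_F12 | exact: adjoint_F12_F11].
Qed.
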